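(* Consider the hybrid system $\mathcal H$ described in the context, and suppose Assumption 2 (stated in the context) holds. Let $\nu>0$. For each $i\in\{1,\dots,N\}$ select $\sigma_i^\star>0$ and $c_i^\star\ge 0$ with $\sigma_i^\star c_i^\star<1$, select $d_i>d_i^\star:=\frac{\sigma_i^\star}{1-\sigma_i^\star c_i^\star}$, and select $\varepsilon_i^\star>0$ such that $\sum_{i=1}^N(1+d_ic_i^\star)\varepsilon_i^\star\le\nu$. Define, for $q=(x,z,e,\eta)\in\mathcal Q$, $$U(q):=V(x,z)+\sum_{i=1}^N d_i\eta_i .$$ Then there exist $\underline{\alpha}_U,\overline{\alpha}_U\in\mathcal K_\infty$ such that for any choice of $\alpha_i\in\mathcal K_\infty$, $\sigma_i\in[0,\sigma_i^\star]$, $c_i\in[0,c_i^\star]$, $\varepsilon_i\in(0,\varepsilon_i^\star]$ and $b_i\in[0,1]$, $i\in\{1,\dots,N\}$, the following hold: (i) for all $q\in\mathcal Q$, $\underline{\alpha}_U(|(x-\psi(z),\eta)|)\le U(q)\le\overline{\alpha}_U(|(\psi^{-R}(x)-z,\eta)|)$; (ii) for all $q\in\mathcal C$ and all $w=(u,v)\in\mathcal W$, $$\langle\nabla U(q),F(q,w)\rangle\le-\alpha(V(x,z))-\sum_{i=1}^N\delta_i\alpha_i(\eta_i)+\nu+\theta(|v|),$$ where $\alpha,\theta$ are the functions from Assumption 2 and $\delta_i:=d_i-\sigma_i^\star(1+d_ic_i^\star)>0$; (iii) for all $q\in\mathcal D$ and all $\mathfrak g\in G(q)$, $U(\mathfrak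 g)\le U(q)$.
   Context: Notation: $\mathcal K_\infty$ is the class of continuous, strictly increasing, unbounded functions $\mathbb R_{\ge0}\to\mathbb R_{\ge0}$ vanishing at $0$; $|\cdot|$ is the Euclidean norm. For $S\subseteq\mathbb R^m$, $\mathcal L_S$ is the set of Lebesgue measurable, locally essentially bounded functions $\mathbb R_{\ge0}\to S$. Plant: $\dot x=f_p(x,u,v)$, $y=h(x)$, with $x\in\mathbb R^{n_x}$, input $u\in\mathcal L_{\mathcal U}$, disturbance $v\in\mathcal L_{\mathcal V}$, where $\mathcal U\subseteq\mathbb R^{n_u}$, $\mathcal V\subseteq\mathbb R^{n_v}$, $n_x,n_y\in\mathbb Z_{>0}$, $n_u,n_v\in\mathbb Z_{\ge0}$; $f_p$ is locally Lipschitz in $x$ and continuous in the other arguments, $h:\mathbb R^{n_x}\to\mathbb R^{n_y}$ is continuously differentiable. The output is split into $N\in\{1,\dots,n_y\}$ sensor nodes: $y=(y_1,\dots,y_N)=(h_1(x),\dots,h_N(x))$, $y_i\in\mathbb R^{n_{y_i}}$, $\sum_i n_{y_i}=n_y$. Observer data: $f_o:\mathbb R^{n_z}\times\mathbb R^{n_u}\times\mathbb R^{n_y}\times\mathbb R^{n_y}\to\mathbb R^{n_z}$ continuous ($n_z\ge n_x$), and $\psi:\mathbb R^{n_z}\to\mathbb R^{n_x}$ admitting a right inverse $\psi^{-R}$, i.e. $\psi(\psi^{-R}(x))=x$ for all $x$; the observer has access to $u$ at all times (Assumption 1). Assumption 2: there exist $\underline\alpha,\overline\alpha,\alpha,\gamma_1,\dots,\gamma_N,\theta\in\mathcal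 K_\infty$ and a continuously differentiable $V:\mathbb R^{n_x}\times\mathbb R^{n_z}\to\mathbb R_{\ge0}$ such that for all $x\in\mathbb R^{n_x}$, $z\in\mathbb R^{n_z}$, $u\in\mathcal U$, $v\in\mathcal V$, $e=(e_1,\dots,e_N)\in\mathbb R^{n_y}$ ($e_i\in\mathbb R^{n_{y_i}}$), $\hat y\in\mathbb R^{n_y}$: $\underline\alpha(|x-\psi(z)|)\le V(x,z)\le\overline\alpha(|\psi^{-R}(x)-z|)$ and $\langle\nabla V(x,z),(f_p(x,u,v),f_o(z,u,h(x)+e,\hat y))\rangle\le-\alpha(V(x,z))+\sum_{i=1}^N\gamma_i(|e_i|)+\theta(|v|)$. Hybrid system $\mathcal H$: for $i=1,\dots,N$ let $\alpha_i\in\mathcal K_\infty$, $c_i\ge0$, $b_i\in[0,1]$, $\sigma_i\ge0$, $\varepsilon_i>0$ be design functions/parameters, and $\gamma_i$ as in Assumption 2. State $q=(x,z,e,\eta)\in\mathcal Q:=\mathbb R^{n_x}\times\mathbb R^{n_z}\times\mathbb R^{n_y}\times\mathbb R^N_{\ge0}$, $e=(e_1,\dots,e_N)$, $\eta=(\eta_1,\dots,\eta_N)$; input $w=(u,v)\in\mathcal W:=\mathcal U\times\mathcal V$. Flow map $F(q,w):=\big(f_p(x,u,v),\,f_o(z,u,h(x)+e,h(\psi(z))),\,g_1(x,w),\dots,g_N(x,w),\,\ell_1(\eta_1,e_1),\dots,\ell_N(\eta_N,e_N)\big)$ with $g_i(x,u,v):=-\frac{\partial h_i(x)}{\partial x}f_p(x,u,v)$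 and $\ell_i(\eta_i,e_i):=-\alpha_i(\eta_i)+c_i\gamma_i(|e_i|)$. Flow set $\mathcal C:=\bigcap_{i}\mathcal C_i$, $\mathcal C_i:=\{q\in\mathcal Q:\gamma_i(|e_i|)\le\sigma_i\alpha_i(\eta_i)+\varepsilon_i\}$; jump set $\mathcal D:=\bigcup_i\mathcal D_i$, $\mathcal D_i:=\{q\in\mathcal Q:\gamma_i(|e_i|)\ge\sigma_i\alpha_i(\eta_i)+\varepsilon_i\}$. Jump map $G(q):=\bigcup_iG_i(q)$ where $G_i(q)=\emptyset$ if $q\notin\mathcal D_i$ and, if $q\in\mathcal D_i$, $G_i(q)$ is the single point $(x,z,e',\eta')$ with $e'_i=0$, $e'_j=e_j$, $\eta'_i=b_i\eta_i$, $\eta'_j=\eta_j$ for $j\ne i$. The system is $\dot q=F(q,w)$ for $q\in\mathcal C$, $q^+\in G(q)$ for $q\in\mathcal D$. *)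

From HB Require Import structures.
From mathcomp Require Import all_boot all_order all_algebra.
From mathcomp Require Import all_classical all_reals topology normedtype derive.
Set Implicit Arguments. Unset Strict Implicit. Unset Printing Implicit Defensive.
Import Order.TTheory GRing.Theory Num.Theory.
Import numFieldNormedType.Exports.
Local Open Scope classical_set_scope.
Local Open Scope ring_scope.

Section Defs.
Variable R : realType.

(* Euclidean norm on R^n (the library norm on 'rV is the max norm). *)
Definition enorm (n : nat) (v : 'rV[R]_n) : R :=
  Num.sqrt (\sum_(k < n) (v 0 k) ^+ 2).

(* class K_infinity, for functions R_{>=0} -> R_{>=0} (represented on R) *)
Definition Kinf (a : R -> R) : Prop :=
  [/\ a 0 = 0,
      {within [set r : R | 0 <= r], continuous a},
      (forall r s : R, 0 <= r -> r < s -> a r < a s) &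
      (forall M : R, exists r : R, 0 <= r /\ M < a r)].

Definition C1 (U W : normedModType R) (f : U -> W) : Prop :=
  (forall x, differentiable f x) /\ (forall v, continuous (fun x => 'd f x v)).

Definition loc_lip_x (nx nu nv : nat)
    (f : 'rV[R]_nx -> 'rV[R]_nu -> 'rV[R]_nv -> 'rV[R]_nx) : Prop :=
  forall r : R, 0 < r -> exists L : R, forall x x' u v,
    enorm x <= r -> enorm x' <= r -> enorm u <= r -> enorm v <= r ->
    enorm (f x u v - f x' u v) <= L * enorm (x - x').

(* sensor-node partition of the output coordinates: coordinate k of y
   belongs to node blk k; e_i is the sub-vector of e on the block of node i *)
Definition blknorm (ny N : nat) (blk : 'I_ny -> 'I_N) (e : 'rV[R]_ny) (i : 'I_N) : R :=
  Num.sqrt (\sum_(k < ny | blk k == i) (e 0 k) ^+ 2).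

Definition blkreset (ny N : nat) (blk : 'I_ny -> 'I_N) (e : 'rV[R]_ny) (i : 'I_N)
  : 'rV[R]_ny := \row_k (if blk k == i then 0 else e 0 k).

(* hybrid state q = (x, (z, (e, eta))) *)

Definition Qset (nx nz ny N : nat) : set ('rV[R]_nx * ('rV[R]_nz * ('rV[R]_ny * 'rV[R]_N))) :=
  [set q | forall i : 'I_N, 0 <= (q.2.2.2 : 'rV[R]_N) 0 i].

End Defs.

Notation state R nx nz ny N :=
  ('rV[R]_nx * ('rV[R]_nz * ('rV[R]_ny * 'rV[R]_N)))%type (only parsing).

From HB Require Import structures.
From mathcomp Require Import all_boot all_order all_algebra.
From mathcomp Require Import all_classical all_reals topology normedtype derive.
From mathcomp Require Import lra.
Import Order.TTheory GRing.Theory Num.Theory.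
Import numFieldNormedType.Exports.
Local Open Scope classical_set_scope.
Local Open Scope ring_scope.

(* Along flows, the triggering rule gamma_i(|e_i|) <= sigma_i alpha_i(eta_i) + eps_i bounds
   both the error term that Assumption 2 lets into dV/dt and the term c_i gamma_i(|e_i|)
   feeding eta_i.  Since d_i > sigma_i / (1 - sigma_i c_i), the decay -d_i alpha_i(eta_i)
   absorbs these, with margin delta_i, up to the constants (1 + d_i c_i) eps_i, whose sum
   is at most nu.  A jump only resets e_i and multiplies eta_i by b_i <= 1, so U does not
   increase.  The sandwich bounds hold because all weights d_i are positive and the norm
   of (x - psi z, eta) is at most |x - psi z| + |eta|. *)

Section Kinf_theory.
Context {R : realType}.
Implicit Types (a b : R -> R) (k r s : R).

Lemma Kinf_le {a r s} : Kinf a -> 0 <= r -> r <= s -> a r <= a s.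
Proof.
case=> _ _ a_incr _ r_ge0; rewrite le_eqVlt => /predU1P[-> // | lt_rs].
exact/ltW/a_incr.
Qed.

Lemma Kinf_ge0 {a r} : Kinf a -> 0 <= r -> 0 <= a r.
Proof. by move=> Ka r_ge0; case: (Ka) => a0 _ _ _; rewrite -a0; exact: Kinf_le. Qed.

Lemma KinfD {a b} : Kinf a -> Kinf b -> Kinf (fun r => a r + b r).
Proof.
move=> Ka Kb; case: (Ka) => a0 ca ia ua; case: (Kb) => b0 cb ib _; split.
- by rewrite a0 b0 addr0.
- by move=> x; exact: (continuousD (ca x) (cb x)).
- by move=> r s r_ge0 lt_rs; rewrite ltrD ?ia ?ib.
- move=> M; have [r [r_ge0 lt_Mr]] := ua M; exists r; split => //.
  by rewrite (lt_le_trans lt_Mr) // lerDl Kinf_ge0.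
Qed.

Lemma Kinf_min {a b} : Kinf a -> Kinf b -> Kinf (fun r => Num.min (a r) (b r)).
Proof.
move=> Ka Kb; case: (Ka) => a0 ca ia ua; case: (Kb) => b0 cb ib ub; split.
- by rewrite a0 b0 minxx.
- by move=> x; exact: (continuous_min (ca x) (cb x)).
- by move=> r s r_ge0 lt_rs; rewrite lt_min !gt_min ia ?ib ?orbT.
- move=> M; have [r [r_ge0 lt_Mr]] := ua M; have [s [s_ge0 lt_Ms]] := ub M.
  exists (Num.max r s); split; first by rewrite le_max r_ge0.
  rewrite lt_min (lt_le_trans lt_Mr) ?(lt_le_trans lt_Ms) //.
  + by apply: Kinf_le; rewrite // le_max lexx orbT.
  + by apply: Kinf_le; rewrite // le_max lexx.
Qed.

Lemma Kinf_scale {k} : 0 < k -> Kinf (fun r => k * r).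
Proof.
move=> k_gt0; split.
- by rewrite mulr0.
- by apply: continuous_subspaceT => x; exact: (@scaler_continuous R R^o).
- by move=> r s _ lt_rs; rewrite ltr_pM2l.
- move=> M; exists ((`|M| + 1) / k); split; first by rewrite divr_ge0 ?addr_ge0 // ltW.
  by rewrite mulrC divfK ?gt_eqF //; apply: le_lt_trans (ler_norm M) _; rewrite ltrDl.
Qed.

Lemma Kinf_comp_scale {a k} : 0 < k -> Kinf a -> Kinf (fun r => a (k * r)).
Proof.
move=> k_gt0 [a0 ca ia ua]; split.
- by rewrite mulr0.
- apply/subspace_continuousP => x x_ge0.
  have kx_ge0 : 0 <= k * x by rewrite mulr_ge0 // ltW.
  apply: (cvg_comp (fun r => k * r) a _ (iffLR (subspace_continuousP _ _) ca _ kx_ge0)).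
  move=> P /=; rewrite /within => /(@scaler_continuous R R^o k x); rewrite !nbhs_simpl /=.
  apply: filterS => r /= Pkr r_ge0; apply: Pkr.
  by rewrite /= mulr_ge0 // ltW.
- by move=> r s r_ge0 lt_rs; apply: ia; rewrite ?ltr_pM2l // mulr_ge0 // ltW.
- move=> M; have [r [r_ge0 lt_Mr]] := ua M; exists (r / k).
  split; first by rewrite divr_ge0 // ltW.
  by rewrite mulrC divfK ?gt_eqF.
Qed.

Lemma Kinf_min_half_le {a b A E r} : Kinf a -> Kinf b ->
  0 <= A -> 0 <= E -> 0 <= r -> r <= A + E ->
  Num.min (a (2^-1 * r)) (b (2^-1 * r)) <= a A + b E.
Proof.
move=> Ka Kb A_ge0 E_ge0 r_ge0 le_rAE.
have hr_ge0 : 0 <= 2^-1 * r by rewrite mulr_ge0 // invr_ge0.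
have [le_hA | lt_Ah] := lerP (2^-1 * r) A.
- rewrite ge_min (le_trans (Kinf_le Ka hr_ge0 le_hA)) // lerDl.
  exact: Kinf_ge0.
- have le_hE : 2^-1 * r <= E by lra.
  rewrite ge_min orbC (le_trans (Kinf_le Kb hr_ge0 le_hE)) // lerDr.
  exact: Kinf_ge0.
Qed.

End Kinf_theory.

Section enorm_theory.
Context {R : realType}.

Lemma enorm_ge0 {n} (v : 'rV[R]_n) : 0 <= enorm v.
Proof. exact: sqrtr_ge0. Qed.

Lemma sum_sqr_ge0 {n} (v : 'rV[R]_n) : 0 <= \sum_(k < n) v 0 k ^+ 2.
Proof. by apply: sumr_ge0 => k _; exact: sqr_ge0. Qed.

Lemma enorm_row_mx {n1 n2} (a : 'rV[R]_n1) (b : 'rV[R]_n2) :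
  enorm (row_mx a b) =
  Num.sqrt (\sum_(k < n1) a 0 k ^+ 2 + \sum_(k < n2) b 0 k ^+ 2).
Proof.
rewrite /enorm big_split_ord.
by congr (Num.sqrt (_ + _)); apply: eq_bigr => k _; rewrite (row_mxEl, row_mxEr).
Qed.

Lemma enorm_row_mx_le {n1 n2} (a : 'rV[R]_n1) (b : 'rV[R]_n2) :
  enorm (row_mx a b) <= enorm a + enorm b.
Proof.
rewrite enorm_row_mx /enorm.
have := sum_sqr_ge0 a; have := sum_sqr_ge0 b.
set sa := \sum_(k < n1) _; set sb := \sum_(k < n2) _ => sb_ge0 sa_ge0.
rewrite -(ger0_norm (addr_ge0 (sqrtr_ge0 sa) (sqrtr_ge0 sb))) -sqrtr_sqr.
apply: ler_wsqrtr; rewrite sqrrD !sqr_sqrtr // mulr2n.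
have := mulr_ge0 (sqrtr_ge0 sa) (sqrtr_ge0 sb); lra.
Qed.

Lemma enorm_row_mxl {n1 n2} (a : 'rV[R]_n1) (b : 'rV[R]_n2) :
  enorm a <= enorm (row_mx a b).
Proof. by rewrite enorm_row_mx ler_wsqrtr // lerDl sum_sqr_ge0. Qed.

Lemma enorm_row_mxr {n1 n2} (a : 'rV[R]_n1) (b : 'rV[R]_n2) :
  enorm b <= enorm (row_mx a b).
Proof. by rewrite enorm_row_mx ler_wsqrtr // lerDr sum_sqr_ge0. Qed.

Lemma coord_le_enorm {n} (v : 'rV[R]_n) i : v 0 i <= enorm v.
Proof.
rewrite (le_trans (ler_norm _)) // -sqrtr_sqr ler_wsqrtr //.
by rewrite (bigD1 i) //= lerDl; apply: sumr_ge0 => k _; exact: sqr_ge0.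
Qed.

Lemma enorm_le_sum {n} {v : 'rV[R]_n} :
  (forall i, 0 <= v 0 i) -> enorm v <= \sum_(i < n) v 0 i.
Proof.
move=> v_ge0; have sum_ge0 : 0 <= \sum_(i < n) v 0 i by exact: sumr_ge0.
rewrite -(ger0_norm sum_ge0) -sqrtr_sqr ler_wsqrtr // [X in _ <= X]expr2 mulr_suml.
apply: ler_sum => i _; rewrite expr2 ler_wpM2l //.
by rewrite (bigD1 i) //= lerDl; exact: sumr_ge0.
Qed.

Lemma weighted_sum_ge_enorm {n} (d : 'I_n -> R) (m : R) (v : 'rV[R]_n) :
  0 <= m -> (forall i, m <= d i) -> (forall i, 0 <= v 0 i) ->
  m * enorm v <= \sum_(i < n) d i * v 0 i.
Proof.
move=> m_ge0 m_le v_ge0.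
rewrite (le_trans (ler_wpM2l m_ge0 (enorm_le_sum v_ge0))) // mulr_sumr.
by apply: ler_sum => i _; exact: ler_wpM2r.
Qed.

Lemma weighted_sum_le_enorm {n} {d : 'I_n -> R} (v : 'rV[R]_n) :
  (forall i, 0 <= d i) ->
  \sum_(i < n) d i * v 0 i <= (\sum_(i < n) d i) * enorm v.
Proof.
by move=> d_ge0; rewrite mulr_suml; apply: ler_sum => i _; rewrite ler_wpM2l ?coord_le_enorm.
Qed.

End enorm_theory.

Section gain_inequalities.
Context {R : realType}.

Lemma design_margin_gt0 {s c d : R} :
  0 < s -> s * c < 1 -> s / (1 - s * c) < d -> 0 < d /\ 0 < d - s * (1 + d * c).
Proof.
move=> s_gt0 sc_lt1; rewrite ltr_pdivrMr ?subr_gt0 // => lt_s_d.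
split; last by lra.
have : 0 < d * (1 - s * c) by lra.
by rewrite pmulr_lgt0 // subr_gt0.
Qed.

(* [g] stands for gamma_i(|e_i|), the input of node i to dV/dt, and [d * (- a + c * g)]
   for the derivative of d_i eta_i along the flow. *)
Lemma flow_term_le (g a d s sS c cS e eS : R) :
  0 <= g -> 0 <= a -> 0 <= d -> 0 <= s <= sS -> 0 <= c <= cS -> e <= eS ->
  g <= s * a + e ->
  g + d * (- a + c * g) + (d - sS * (1 + d * cS)) * a <= (1 + d * cS) * eS.
Proof.
move=> g_ge0 a_ge0 d_ge0 /andP[s_ge0 le_s] /andP[c_ge0 le_c] le_e le_g.
have dc_ge0 : 0 <= 1 + d * c by rewrite addr_ge0 ?mulr_ge0.
have le_trigger : g * (1 + d * c) <= (s * a + e) * (1 + d * c) by exact: ler_wpM2r.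
have le_sa : s * a <= sS * a by exact: ler_wpM2r.
have le_trigger_max : (s * a + e) * (1 + d * c) <= (sS * a + eS) * (1 + d * c).
  by rewrite ler_wpM2r // lerD.
have le_gain_max : (sS * a + eS) * (1 + d * c) <= (sS * a + eS) * (1 + d * cS).
  by rewrite ler_wpM2l ?lerD2l ?ler_wpM2l //; lra.
lra.
Qed.

Lemma flow_sum_le {n} (g a : 'I_n -> R) {d s sS c cS e eS : 'I_n -> R} {nu : R} :
  (forall i, 0 <= g i) -> (forall i, 0 <= a i) -> (forall i, 0 <= d i) ->
  (forall i, 0 <= s i <= sS i) -> (forall i, 0 <= c i <= cS i) ->
  (forall i, e i <= eS i) -> (forall i, g i <= s i * a i + e i) ->
  \sum_(i < n) (1 + d i * cS i) * eS i <= nu ->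
  \sum_(i < n) g i + \sum_(i < n) d i * (- a i + c i * g i)
    + \sum_(i < n) (d i - sS i * (1 + d i * cS i)) * a i <= nu.
Proof.
move=> g_ge0 a_ge0 d_ge0 s_in c_in le_e le_g; apply: le_trans.
by rewrite -!big_split ler_sum // => i _; exact: flow_term_le.
Qed.

Lemma weighted_sum_shrink_le n (d : 'I_n -> R) (v : 'rV[R]_n) i (b : R) :
  (forall j, 0 <= d j) -> 0 <= v 0 i -> b <= 1 ->
  \sum_(j < n) d j * (\row_k (if k == i then b * v 0 k else v 0 k)) 0 j
    <= \sum_(j < n) d j * v 0 j.
Proof.
move=> d_ge0 vi_ge0 b_le1; apply: ler_sum => j _; rewrite mxE.
by case: eqP => [-> | _] //; rewrite ler_wpM2l // ler_piMl.
Qed.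

End gain_inequalities.

Lemma diff_compD_linear (R : realType) (U W : normedModType R)
    (P : {linear U -> W}) (L : {linear U -> R^o}) (V : W -> R^o) (q w : U) :
  continuous P -> continuous L -> differentiable V (P q) ->
  'd (V \o P + L) q w = 'd V (P q) (P w) + L w.
Proof.
move=> P_cont L_cont V_diff.
have P_diff := linear_differentiable q P_cont.
rewrite diffD; [|exact: differentiable_comp|exact: linear_differentiable].
by rewrite diff_comp // (diff_lin _ P_cont) (diff_lin _ L_cont).
Qed.

Lemma continuous_fst {T U : topologicalType} : continuous (@fst T U).
Proof. by move=> x; exact: cvg_fst. Qed.

Lemma continuous_snd {T U : topologicalType} : continuous (@snd T U).
Proof. by move=> x; exact: cvg_snd. Qed.

Section lyapunov_candidate.
Variables (R : realType) (nx nz ny N : nat).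
Local Notation S := (state R nx nz ny N).
Variables (V : 'rV[R]_nx * 'rV[R]_nz -> R) (d : 'I_N -> R).

Definition lyap (q : S) : R := V (q.1, q.2.1) + \sum_(i < N) d i * q.2.2.2 0 i.

Lemma continuous_plant_observer : continuous (fun q : S => (q.1, q.2.1)).
Proof.
move=> q; exact: (cvg_pair (continuous_fst q)
  (continuous_comp (continuous_snd q) (continuous_fst _))).
Qed.

Lemma continuous_eta_weighted_sum : continuous (fun q : S => \sum_(i < N) d i * q.2.2.2 0 i).
Proof.
have eta_cont i : continuous (fun q : S => q.2.2.2 0 i).
  move=> q; exact: (continuous_comp (continuous_comp (continuous_comp
    (continuous_snd q) (continuous_snd _)) (continuous_snd _))
    (@coord_continuous R 1 N 0 i _)).
have -> : (fun q : S => \sum_(i < N) d i * q.2.2.2 0 i) =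
    \sum_(i < N) (fun q : S => d i * q.2.2.2 0 i) by rewrite fct_sumE.
elim/big_ind: _ => [q | f g f_cont g_cont q | i _ q].
- exact: cvg_cst.
- exact: (continuousD (f_cont q) (g_cont q)).
- exact: (continuous_comp (eta_cont i q) (@scaler_continuous R R^o (d i) _)).
Qed.

Lemma diff_lyap (q w : S) : (forall p, differentiable V p) ->
  'd lyap q w = 'd V (q.1, q.2.1) (w.1, w.2.1) + \sum_(i < N) d i * w.2.2.2 0 i.
Proof.
move=> V_diff.
have P_lin : linear (fun q : S => (q.1, q.2.1)) by [].
have L_lin : linear (fun q : S => \sum_(i < N) d i * q.2.2.2 0 i).
  move=> a u v; rewrite scaler_sumr -big_split; apply: eq_bigr => i _ /=.
  by rewrite !mxE mulrDr /GRing.scale /= mulrCA.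
pose P : {linear S -> ('rV[R]_nx * 'rV[R]_nz)%type} :=
  HB.pack (fun q : S => (q.1, q.2.1)) (GRing.isLinear.Build _ _ _ _ _ P_lin).
pose L : {linear S -> R^o} :=
  HB.pack (fun q : S => \sum_(i < N) d i * q.2.2.2 0 i)
    (GRing.isLinear.Build _ _ _ _ _ L_lin).
have -> : lyap = (V : _ -> R^o) \o P + L by [].
rewrite diff_compD_linear //; [exact: continuous_plant_observer | exact: continuous_eta_weighted_sum].
Qed.

Lemma lyap_ge_Kinf (psi : 'rV[R]_nz -> 'rV[R]_nx) (alo : R -> R) (m : R) (q : S) :
  Kinf alo -> 0 < m -> (forall i, m <= d i) ->
  (forall x z, alo (enorm (x - psi z)) <= V (x, z)) -> Qset q ->
  Num.min (alo (2^-1 * enorm (row_mx (q.1 - psi q.2.1) q.2.2.2)))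
          (m * (2^-1 * enorm (row_mx (q.1 - psi q.2.1) q.2.2.2))) <= lyap q.
Proof.
move=> Kalo m_gt0 m_le V_ge q_ge0.
apply: (le_trans (Kinf_min_half_le Kalo (Kinf_scale m_gt0) (enorm_ge0 _)
  (enorm_ge0 _) (enorm_ge0 _) (enorm_row_mx_le _ _))).
by rewrite lerD // weighted_sum_ge_enorm // ltW.
Qed.

Lemma lyap_le_Kinf (psiR : 'rV[R]_nx -> 'rV[R]_nz) (ahi : R -> R) (q : S) :
  Kinf ahi -> (forall i, 0 <= d i) ->
  (forall x z, V (x, z) <= ahi (enorm (psiR x - z))) ->
  lyap q <= ahi (enorm (row_mx (psiR q.1 - q.2.1) q.2.2.2))
            + (\sum_(i < N) d i + 1) * enorm (row_mx (psiR q.1 - q.2.1) q.2.2.2).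
Proof.
move=> Kahi d_ge0 V_le; rewrite /lyap lerD //.
  exact: le_trans (V_le _ _) (Kinf_le Kahi (enorm_ge0 _) (enorm_row_mxl _ _)).
apply: le_trans (weighted_sum_le_enorm q.2.2.2 d_ge0) _.
rewrite mulrDl mul1r ler_wpDr ?enorm_ge0 // ler_wpM2l ?enorm_row_mxr //.
exact: sumr_ge0.
Qed.

End lyapunov_candidate.

Theorem theorem1 (R : realType) (nx nuu nv ny nz N : nat)
  (blk : 'I_ny -> 'I_N)
  (Uset : set 'rV[R]_nuu) (Vset : set 'rV[R]_nv)
  (fp : 'rV[R]_nx -> 'rV[R]_nuu -> 'rV[R]_nv -> 'rV[R]_nx)
  (h : 'rV[R]_nx -> 'rV[R]_ny)
  (fo : 'rV[R]_nz -> 'rV[R]_nuu -> 'rV[R]_ny -> 'rV[R]_ny -> 'rV[R]_nz)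
  (psi : 'rV[R]_nz -> 'rV[R]_nx) (psiR : 'rV[R]_nx -> 'rV[R]_nz)
  (V : 'rV[R]_nx * 'rV[R]_nz -> R)
  (alo ahi alpha theta : R -> R) (gamma : 'I_N -> R -> R)
  (nu : R) (sigS cS d epsS : 'I_N -> R) :
  (0 < nx)%N -> (0 < ny)%N -> (0 < N)%N -> (N <= ny)%N ->
  (forall i : 'I_N, exists k : 'I_ny, blk k = i) ->
  continuous (fun p : 'rV[R]_nx * ('rV[R]_nuu * 'rV[R]_nv) => fp p.1 p.2.1 p.2.2) ->
  loc_lip_x fp ->
  C1 h ->
  continuous (fun p : 'rV[R]_nz * ('rV[R]_nuu * ('rV[R]_ny * 'rV[R]_ny)) =>
                fo p.1 p.2.1 p.2.2.1 p.2.2.2) ->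
  (forall x, psi (psiR x) = x) ->
  (* Assumption 2 *)
  Kinf alo -> Kinf ahi -> Kinf alpha -> (forall i, Kinf (gamma i)) -> Kinf theta ->
  C1 V -> (forall p, 0 <= V p) ->
  (forall x z, alo (enorm (x - psi z)) <= V (x, z) /\
               V (x, z) <= ahi (enorm (psiR x - z))) ->
  (forall x z u v e yh, Uset u -> Vset v ->
     'd V (x, z) (fp x u v, fo z u (h x + e) yh)
       <= - alpha (V (x, z)) + \sum_(i < N) gamma i (blknorm blk e i)
          + theta (enorm v)) ->
  (* design choices *)
  0 < nu ->
  (forall i, 0 < sigS i) -> (forall i, 0 <= cS i) -> (forall i, sigS i * cS i < 1) ->
  (forall i, sigS i / (1 - sigS i * cS i) < d i) ->
  (forall i, 0 < epsS i) ->
  \sum_(i < N) (1 + d i * cS i) * epsS i <= nu ->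
  let U := fun q : state R nx nz ny N =>
             V (q.1, q.2.1) + \sum_(i < N) d i * q.2.2.2 0 i in
  let delta := fun i : 'I_N => d i - sigS i * (1 + d i * cS i) in
  (forall i, 0 < delta i) /\
  exists aUlo aUhi : R -> R, Kinf aUlo /\ Kinf aUhi /\
  forall (al : 'I_N -> R -> R) (sig c eps b : 'I_N -> R),
    (forall i, Kinf (al i)) ->
    (forall i, 0 <= sig i <= sigS i) -> (forall i, 0 <= c i <= cS i) ->
    (forall i, 0 < eps i <= epsS i) -> (forall i, 0 <= b i <= 1) ->
    let Cset := [set q : state R nx nz ny N | Qset q /\ forall i,
                   gamma i (blknorm blk q.2.2.1 i) <= sig i * al i (q.2.2.2 0 i) + eps i] in
    let Dset_i := fun i : 'I_N => [set q : state R nx nz ny N | Qset q /\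
                   sig i * al i (q.2.2.2 0 i) + eps i <= gamma i (blknorm blk q.2.2.1 i)] in
    let Dset := [set q | exists i, Dset_i i q] in
    let F := fun (q : state R nx nz ny N) (u : 'rV[R]_nuu) (v : 'rV[R]_nv) =>
      (fp q.1 u v,
       (fo q.2.1 u (h q.1 + q.2.2.1) (h (psi q.2.1)),
        (- ('d h (q.1 : 'rV[R]_nx) : 'rV[R]_nx -> 'rV[R]_ny) (fp q.1 u v),
         \row_i (- al i (q.2.2.2 0 i) + c i * gamma i (blknorm blk q.2.2.1 i))))) in
    let G := fun q : state R nx nz ny N =>
      [set g | exists i, Dset_i i q /\
         g = (q.1, (q.2.1, (blkreset blk q.2.2.1 i,
               \row_j (if j == i then b i * q.2.2.2 0 j else q.2.2.2 0 j))))] in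
    [/\ (forall q, Qset q ->
           aUlo (enorm (row_mx (q.1 - psi q.2.1) q.2.2.2)) <= U q /\
           U q <= aUhi (enorm (row_mx (psiR q.1 - q.2.1) q.2.2.2))),
        (forall q u v, Cset q -> Uset u -> Vset v ->
           'd U q (F q u v) <= - alpha (V (q.1, q.2.1))
              - \sum_(i < N) delta i * al i (q.2.2.2 0 i) + nu + theta (enorm v)) &
        (forall q, Dset q -> forall g, G q g -> U g <= U q)].
Proof.
move=> _ _ _ _ _ _ _ _ _ _ Kalo Kahi _ Kgamma _ V_C1 _ V_sandwich V_diss _
  sigS_gt0 _ sc_lt1 d_gt _ sumeps U delta.
have margin i := design_margin_gt0 (sigS_gt0 i) (sc_lt1 i) (d_gt i).
have d_ge0 i : 0 <= d i by rewrite ltW // (margin i).1.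
split=> [i | ]; first exact: (margin i).2.
pose m := \big[Num.min/1]_i d i.
have m_gt0 : 0 < m by apply: lt_bigmin => // i _; exact: (margin i).1.
have m_le i : m <= d i by exact: bigmin_le.
exists (fun r => Num.min (alo (2^-1 * r)) (m * (2^-1 * r))),
       (fun r => ahi r + (\sum_(i < N) d i + 1) * r).
split; first by apply: Kinf_comp_scale (Kinf_min Kalo (Kinf_scale m_gt0)); rewrite invr_gt0.
split; first by apply: KinfD Kahi (Kinf_scale _); rewrite ltr_pwDr ?sumr_ge0.
move=> al sig c eps b Kal sig_in c_in eps_in b_in Cset Dset_i Dset F G; split.
- move=> q q_ge0; split.
  + by apply: lyap_ge_Kinf => // x z; case: (V_sandwich x z).
  + by apply: lyap_le_Kinf => // x z; case: (V_sandwich x z).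
- move=> q u v [q_ge0 q_flow] u_in v_in.
  rewrite /U /delta diff_lyap; last exact: V_C1.1.
  under eq_bigr do rewrite mxE.
  have := V_diss q.1 q.2.1 u v q.2.2.1 (h (psi q.2.1)) u_in v_in.
  have := flow_sum_le (fun i => gamma i (blknorm blk q.2.2.1 i)) (fun i => al i (q.2.2.2 0 i))
    (fun i => Kinf_ge0 (Kgamma i) (sqrtr_ge0 _)) (fun i => Kinf_ge0 (Kal i) (q_ge0 i))
    d_ge0 sig_in c_in (fun i => (andP (eps_in i)).2) q_flow sumeps.
  rewrite /=; lra.
- move=> q [i [q_ge0 _]] g [j [_ ->]]; rewrite /U /= lerD2l.
  by apply: weighted_sum_shrink_le; case/andP: (b_in j).
Qed.
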